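(* Let $q$ be a prime power and $1\le t_i\le t_o<s$. If there exists a linear $(t_i,t_o,s,q)$-AONT, then there exists a linear $(t_i,t_o,s-1,q)$-AONT.
   Context: A linear $(t_i,t_o,s,q)$-AONT is given by an invertible $s\times s$ matrix $M$ over $\mathbb{F}_q$ defining the map $\mathbf{x}\mapsto\mathbf{y}=\mathbf{x}M^{-1}$ on row vectors of $\mathbb{F}_q^s$, such that for every set $I$ of $t_i$ input coordinates and every set $J$ of $s-t_o$ output coordinates, the pair $((x_i)_{i\in I},(y_j)_{j\in J})$ takes every value in $\mathbb{F}_q^{t_i+s-t_o}$ equally often (exactly $q^{t_o-t_i}$ times) as $\mathbf{x}$ ranges over $\mathbb{F}_q^s$. Equivalently, $M$ is invertible and every $t_o\times t_i$ submatrix of $M$ has rank $t_i$. *)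

From HB Require Import structures.
From mathcomp Require Import all_boot all_order all_algebra.
Set Implicit Arguments. Unset Strict Implicit. Unset Printing Implicit Defensive.
Import GRing.Theory.
Local Open Scope ring_scope.

(* Submatrices are given by injective
   row/column selections; the order of the selection does not affect rank. *)
Definition linear_AONT (F : fieldType) (ti to s : nat) (M : 'M[F]_s) : Prop :=
  M \in unitmx /\
  forall (f : 'I_to -> 'I_s) (g : 'I_ti -> 'I_s),
    injective f -> injective g -> \rank (mxsub f g M) = ti.

From mathcomp Require Import all_boot all_order all_algebra.
Set Implicit Arguments. Unset Strict Implicit. Unset Printing Implicit Defensive.
Import GRing.Theory.
Local Open Scope ring_scope.

(* Laplace expansion of det M along any row shows that some (s-1)-minor of an
   invertible M is itself invertible.  Deleting a row and a column of M cannot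
   create new t_o x t_i submatrices, so that minor is again an AONT.  The
   argument works over any field and never uses 1 <= t_i <= t_o. *)

Lemma mxsub_row'_col' (R : Type) (m n p q : nat) (i : 'I_m.+1) (j : 'I_n.+1)
    (f : 'I_p -> 'I_m) (g : 'I_q -> 'I_n) (A : 'M[R]_(m.+1, n.+1)) :
  mxsub f g (row' i (col' j A)) = mxsub (lift i \o f) (lift j \o g) A.
Proof. by apply/matrixP => a b; rewrite !mxE. Qed.

Lemma unitmx_minor (F : fieldType) (n : nat) (i : 'I_n.+1) (A : 'M[F]_n.+1) :
  A \in unitmx -> exists j, row' i (col' j A) \in unitmx.
Proof.
rewrite unitmxE unitfE => detA_neq0.
apply/existsP; apply: contraNT detA_neq0; rewrite negb_exists => /forallP minors0.
rewrite (expand_det_row _ i) big1 // => j _.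
move: (minors0 j); rewrite unitmxE unitfE negbK => /eqP minor0.
by rewrite /cofactor minor0 !mulr0.
Qed.

Lemma linear_AONT_minor (F : fieldType) (ti to n : nat) (i j : 'I_n.+1)
    (A : 'M[F]_n.+1) :
  linear_AONT ti to A -> row' i (col' j A) \in unitmx ->
  linear_AONT ti to (row' i (col' j A)).
Proof.
move=> [_ rankA] minor_unit; split=> // f g injf injg.
by rewrite mxsub_row'_col'; apply: rankA; apply: inj_comp => //; apply: lift_inj.
Qed.

Lemma linear_AONT_shrink (F : fieldType) (ti to n : nat) (A : 'M[F]_n.+1) :
  linear_AONT ti to A -> exists B : 'M[F]_n, linear_AONT ti to B.
Proof.
move=> AONT_A; have [j minor_unit] := unitmx_minor ord0 AONT_A.1.
by exists (row' ord0 (col' j A)); apply: linear_AONT_minor.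
Qed.

Theorem mainTheorem7 (F : finFieldType) (ti to s : nat) :
  (1 <= ti)%N -> (ti <= to)%N -> (to < s)%N ->
  (exists M : 'M[F]_s, linear_AONT ti to M) ->
  exists M : 'M[F]_(s.-1), linear_AONT ti to M.
Proof.
case: s => [//|n] _ _ _ [M AONT_M].
exact: linear_AONT_shrink AONT_M.
Qed.
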